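(* Fix $m\in\{1,\dots,M\}$ and suppose $\varrho_h^{m-1}\in Q_h(\Omega)$, $\mathbf{u}_h^m\in\mathbf{V}_h(\Omega)$ are given bounded functions. Then the solution $\varrho_h^m\in Q_h(\Omega)$ of the discrete continuity scheme satisfies $$\min_{x\in\Omega}\varrho_h^m\ge\min_{x\in\Omega}\varrho_h^{m-1}\Big(\frac{1}{1+\Delta t\|\operatorname{div}_h\mathbf{u}_h^m\|_{L^\infty(\Omega)}}\Big).$$ Consequently, if $\varrho_h^{m-1}(\cdot)>0$ then $\varrho_h^m(\cdot)>0$.
   Context: $\Omega\subset\mathbb{R}^N$ ($N=2,3$) bounded polygonal domain; $E_h$ shape regular tetrahedral mesh, interior faces $\Gamma_h^I$; $Q_h(\Omega)$ piecewise constants; $\mathbf{V}_h(\Omega)$ Crouzeix–Raviart space with vanishing boundary face means; $\operatorname{div}_h$ elementwise divergence; $\Delta t>0$ the time step, $\partial_t^h\varrho^m=(\varrho^m-\varrho^{m-1})/\Delta t$. The discrete continuity scheme: $\int_\Omega\partial_t^h(\varrho_h^m)\phi_h\,dx=\Delta t\sum_{\Gamma\in\Gamma_h^I}\int_\Gamma(\varrho_-^m(\mathbf{u}_h^m\cdot\nu)_h^++\varrho_+^m(\mathbf{u}_h^m\cdot\nu)_h^-)[\phi_h]_\Gamma\,dS$ for all $\phi_h\in Q_h(\Omega)$, with $(\mathbf{u}_h\cdot\nu)_h^\pm=(\frac{1}{|\Gamma|}\int_\Gamma\mathbf{u}_h\cdot\nu\,dS)^\pm$, $a^+=\max(a,0)$,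 $a^-=\min(a,0)$, $\varrho_\pm$ the traces from the two elements sharing $\Gamma$ ($\nu$ points from $E_-$ to $E_+$), $[\cdot]_\Gamma$ the jump.
   Formalization: The lower bound on $\min_{x\in\Omega}\varrho_h^m$ holds only for nonnegative $\varrho_h^{m-1}$, the right side of the scheme carries no factor Δt, and the jump $[\phi_h]_\Gamma$ is the value of $\phi_h$ on E₊ minus its value on E₋. Each condition added here is assumed in the paper as well or is needed for the statement above to hold. This also corrects a misprint. *)

From HB Require Import structures.
From mathcomp Require Import all_boot all_order all_algebra.
Set Implicit Arguments. Unset Strict Implicit. Unset Printing Implicit Defensive.
Import Order.TTheory GRing.Theory Num.Theory.
Local Open Scope ring_scope.

(* Every face has an
   element [eminus] it belongs to; interior faces (in Gamma_h^I) additionally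
   have a distinct neighbouring element [eplus]; the unit normal nu of a face
   points from [eminus] to [eplus] (outward from [eminus] for boundary faces). *)
Record mesh (R : realFieldType) := Mesh {
  elt : finType;
  face : finType;
  elt0 : elt;
  vol : elt -> R;
  vol_gt0 : forall E, 0 < vol E;
  area : face -> R;
  area_gt0 : forall G, 0 < area G;
  interior : pred face;
  eminus : face -> elt;
  eplus : face -> elt;
  eplus_neq : forall G, interior G -> eplus G != eminus G
}.

Section MeshDefs.
Variables (R : realFieldType) (T : mesh R).

(* Q_h(Omega): piecewise constants = one value per element *)
Definition Qh := elt T -> R.

(* A velocity u_h is recorded through its face means of the normal component,
   un G = (1/|G|) \int_G u_h . nu dS  (for CR functions this is single valued
   on interior faces). *)
Definition Vh (un : face T -> R) : Prop :=
  forall G, ~~ interior G -> un G = 0.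

(* Elementwise divergence div_h u_h on E = (1/|E|) \int_{dE} u_h . n_E dS
   (u_h is affine on E, so its divergence is constant on E). *)
Definition divh (un : face T -> R) (E : elt T) : R :=
  (vol E)^-1 *
  (\sum_(G : face T | eminus G == E) area G * un G
   - \sum_(G : face T | interior G && (eplus G == E)) area G * un G).

Definition posp (a : R) : R := Num.max a 0.
Definition negp (a : R) : R := Num.min a 0.

Definition intQ (f : Qh) : R := \sum_(E : elt T) vol E * f E.

Definition jump (phi : Qh) (G : face T) : R := phi (eplus G) - phi (eminus G).

Definition scheme (dt : R) (rho_old rho : Qh) (un : face T -> R) : Prop :=
  forall phi : Qh,
    intQ (fun E => (rho E - rho_old E) / dt * phi E)
    = \sum_(G : face T | interior G)
        area G * (rho (eminus G) * posp (un G) + rho (eplus G) * negp (un G))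
        * jump phi G.

Definition minQ (f : Qh) : R := \big[Num.min/f (elt0 T)]_(E : elt T) f E.

Definition LinfQ (f : Qh) : R := \big[Num.max/0]_(E : elt T) `|f E|.

End MeshDefs.

From mathcomp Require Import all_boot all_order all_algebra.
From mathcomp Require Import ring lra.
Set Implicit Arguments. Unset Strict Implicit. Unset Printing Implicit Defensive.
Import Order.TTheory GRing.Theory Num.Theory.
Local Open Scope ring_scope.

(* Test the scheme with the indicator of a set A of elements.  If rho <= c on
   A and rho >= c off A, upwinding makes every face term of
   (flux - c u.nu) [1_A] nonnegative, so the mass change of rho on A is at
   least -c \int_A div_h u.  Taking A = {rho < 0}, c = 0 shows rho >= 0;
   taking A = {E0} with rho minimal at E0, c = rho E0, gives
   rho_old E0 <= rho E0 (1 + dt div_h u(E0)), and the bound follows by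
   replacing div_h u(E0) with its L^infty norm. *)

Section Upwind.
Variables (R : realFieldType) (T : mesh R).

Lemma posp_ge0 (a : R) : 0 <= posp a.
Proof. by rewrite /posp le_max lexx orbT. Qed.

Lemma negp_le0 (a : R) : negp a <= 0.
Proof. by rewrite /negp ge_min lexx orbT. Qed.

Lemma posp_add_negp (a : R) : posp a + negp a = a.
Proof. by rewrite /posp /negp addr_max_min addr0. Qed.

Definition upwind_flux (rho : Qh T) (un : face T -> R) (G : face T) : R :=
  rho (eminus G) * posp (un G) + rho (eplus G) * negp (un G).

Definition indicatorQ (A : pred (elt T)) : Qh T :=
  fun E => if A E then 1 else 0.

Lemma scheme_indicatorQ (dt : R) (rho_old rho : Qh T) un (A : pred (elt T)) :
  scheme dt rho_old rho un ->
  \sum_(E | A E) vol E * ((rho E - rho_old E) / dt)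
  = \sum_(G | interior G) area G * upwind_flux rho un G * jump (indicatorQ A) G.
Proof.
move/(_ (indicatorQ A)); rewrite /intQ => <-.
rewrite big_mkcond; apply: eq_bigr => E _.
by rewrite /indicatorQ; case: (A E); rewrite ?mulr1 ?mulr0.
Qed.

Section Shift.
Variables (rho : Qh T) (un : face T -> R) (A : pred (elt T)) (c : R).
Hypothesis rho_le_in : forall E, A E -> rho E <= c.
Hypothesis rho_ge_out : forall E, ~~ A E -> c <= rho E.

Lemma upwind_flux_shift_jump_ge0 G :
  0 <= (upwind_flux rho un G - c * un G) * jump (indicatorQ A) G.
Proof.
have shift : upwind_flux rho un G - c * un G
    = (rho (eminus G) - c) * posp (un G) + (rho (eplus G) - c) * negp (un G).
  by rewrite /upwind_flux -{3}(posp_add_negp (un G)); ring.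
have hp := posp_ge0 (un G); have hn := negp_le0 (un G).
rewrite shift /jump /indicatorQ.
case: (boolP (A (eplus G))) => Ap; case: (boolP (A (eminus G))) => Am;
  rewrite ?subrr ?mulr0 // ?subr0 ?sub0r ?mulr1 ?mulrN1 ?oppr_ge0.
- have := rho_le_in Ap; have := rho_ge_out Am; nra.
- have := rho_le_in Am; have := rho_ge_out Ap; nra.
Qed.

Lemma upwind_flux_indicatorQ_ge :
  c * \sum_(G | interior G) area G * un G * jump (indicatorQ A) G
  <= \sum_(G | interior G) area G * upwind_flux rho un G * jump (indicatorQ A) G.
Proof.
rewrite -subr_ge0 mulr_sumr -sumrB; apply: sumr_ge0 => G _.
have -> : area G * upwind_flux rho un G * jump (indicatorQ A) G
          - c * (area G * un G * jump (indicatorQ A) G)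
        = area G * ((upwind_flux rho un G - c * un G) * jump (indicatorQ A) G).
  by ring.
exact: mulr_ge0 (ltW (area_gt0 G)) (upwind_flux_shift_jump_ge0 G).
Qed.

End Shift.

Lemma divh_indicatorQ1 (un : face T -> R) E0 : Vh un ->
  vol E0 * divh un E0
  = - \sum_(G | interior G) area G * un G * jump (indicatorQ (pred1 E0)) G.
Proof.
move=> Vun; rewrite /divh mulrA mulfV ?mul1r; last exact/lt0r_neq0/vol_gt0.
rewrite /jump (eq_bigr _ (fun G _ => mulrBr _ _ _)) sumrB opprB /indicatorQ /=.
congr (_ - _).
  rewrite (bigID (@interior R T)) /= [X in _ + X]big1 ?addr0; last first.
    by move=> G /andP [_ HG]; rewrite (Vun G HG) mulr0.
  rewrite big_mkcond [RHS]big_mkcond /=; apply: eq_bigr => G _.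
  by case: (interior G); case: (eminus G == E0); rewrite /= ?mulr1 ?mulr0.
rewrite big_mkcond [RHS]big_mkcond /=; apply: eq_bigr => G _.
by case: (interior G); case: (eplus G == E0); rewrite /= ?mulr1 ?mulr0.
Qed.

Lemma scheme_ge0 (dt : R) (rho_old rho : Qh T) un :
  0 < dt -> scheme dt rho_old rho un -> (forall E, 0 <= rho_old E) ->
  forall E, 0 <= rho E.
Proof.
move=> dt_gt0 Hs old_ge0 E0; rewrite leNgt; apply/negP => neg0.
pose A : pred (elt T) := fun E => rho E < 0.
have drop_lt0 E : A E -> vol E * ((rho E - rho_old E) / dt) < 0.
  move=> AE; rewrite pmulr_rlt0 ?vol_gt0 // pmulr_llt0 ?invr_gt0 //.
  by have := old_ge0 E; rewrite /A in AE; lra.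
have mass_lt0 : \sum_(E | A E) vol E * ((rho E - rho_old E) / dt) < 0.
  rewrite (bigD1 E0) //=; have := drop_lt0 E0 neg0.
  suff : \sum_(E | A E && (E != E0)) vol E * ((rho E - rho_old E) / dt) <= 0.
    by lra.
  by apply: sumr_le0 => E /andP [AE _]; exact/ltW/drop_lt0.
have rho_le0 E : A E -> rho E <= 0 by move/ltW.
have rho_ge0 E : ~~ A E -> 0 <= rho E by rewrite -leNgt.
have := upwind_flux_indicatorQ_ge un rho_le0 rho_ge0.
by rewrite mul0r -(scheme_indicatorQ A Hs); lra.
Qed.

Lemma scheme_argmin_bound (dt : R) (rho_old rho : Qh T) un E0 :
  0 < dt -> Vh un -> scheme dt rho_old rho un ->
  (forall E, rho E0 <= rho E) ->
  rho_old E0 <= rho E0 * (1 + dt * divh un E0).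
Proof.
move=> dt_gt0 Vun Hs rho_min.
have rho_le E : pred1 E0 E -> rho E <= rho E0 by move/eqP ->.
have rho_ge E : ~~ pred1 E0 E -> rho E0 <= rho E by move=> _; exact: rho_min.
have := upwind_flux_indicatorQ_ge un rho_le rho_ge.
rewrite -(scheme_indicatorQ _ Hs) big_pred1_eq.
rewrite -[X in X <= _]opprK -mulrN -(divh_indicatorQ1 _ Vun).
rewrite mulrCA -mulrN ler_pM2l ?vol_gt0 // ler_pdivlMr // => ineq.
by rewrite mulrDr mulr1; nra.
Qed.

End Upwind.

Section MinMax.
Variables (R : realFieldType) (T : mesh R).

Lemma minQ_le (f : Qh T) E : minQ f <= f E.
Proof. by rewrite /minQ (bigD1 E) //= ge_min lexx. Qed.

Lemma minQ_attained (f : Qh T) : exists E, minQ f = f E.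
Proof.
rewrite /minQ; apply: (big_ind (fun x => exists E, x = f E)).
- by exists (elt0 T).
- move=> x y [E1 ->] [E2 ->]; rewrite /Num.min.
  by case: ifP => _; [exists E1 | exists E2].
- by move=> E _; exists E.
Qed.

Lemma LinfQ_ge (f : Qh T) E : `|f E| <= LinfQ f.
Proof. by rewrite /LinfQ (bigD1 E) //= le_max lexx. Qed.

Lemma LinfQ_ge0 (f : Qh T) : 0 <= LinfQ f.
Proof. exact: le_trans (normr_ge0 _) (LinfQ_ge f (elt0 T)). Qed.

End MinMax.

Theorem lemma3p3 (R : realFieldType) (T : mesh R) (dt : R)
    (rho_old rho : Qh T) (un : face T -> R) :
  0 < dt -> Vh un -> scheme dt rho_old rho un ->
  ((forall E, 0 <= rho_old E) ->
     minQ rho >= minQ rho_old * (1 + dt * LinfQ (divh un))^-1)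
  /\ ((forall E, 0 < rho_old E) -> forall E, 0 < rho E).
Proof.
move=> dt_gt0 Vun Hs.
have [E0 minE0] := minQ_attained rho.
have rho_min E : rho E0 <= rho E by rewrite -minE0 minQ_le.
have bound := scheme_argmin_bound dt_gt0 Vun Hs rho_min.
split=> [old_ge0 | old_gt0 E].
- have m_ge0 := scheme_ge0 dt_gt0 Hs old_ge0 E0.
  have d_le : divh un E0 <= LinfQ (divh un).
    exact: le_trans (ler_norm _) (LinfQ_ge _ E0).
  have L_ge0 := mulr_ge0 (ltW dt_gt0) (LinfQ_ge0 (divh un)).
  have old_le := minQ_le rho_old E0.
  rewrite minE0 ler_pdivrMr; last by lra.
  by have := ler_wpM2l m_ge0 (ler_wpM2l (ltW dt_gt0) d_le); nra.
- have m_ge0 := scheme_ge0 dt_gt0 Hs (fun E => ltW (old_gt0 E)) E0.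
  apply: lt_le_trans (rho_min E); rewrite lt_neqAle m_ge0 andbT.
  by apply/eqP => m0; move: bound (old_gt0 E0); rewrite -m0 mul0r; lra.
Qed.
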